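(* Fix any configuration of open and closed sites on $\mathcal{L}$. Then for every $n\ge 1$, $$\xi_n=\overline{\xi}_n\cap[\ell_n,\infty).$$ Moreover, if $\xi_n\neq\emptyset$ then $u_n=\overline{u}_n$.
   Context: Let $\mathcal{L}=\{(n,m)\in\mathbb{Z}^2:n\ge0,\ n+m\text{ even}\}$. Each site of $\mathcal{L}$ is open or closed. For $z,z'\in\mathcal{L}$ write $z\to z'$ if there exist $k\ge0$ and sites $z=z_0,\dots,z_k=z'$ of $\mathcal{L}$ such that $z_0,\dots,z_{k-1}$ are open and $z_{i+1}-z_i\in\{(1,1),(2,0),(1,-1)\}$ for every $i$. Let $o=(0,0)$. Use the conventions $\sup\emptyset=-\infty$ and $\inf\emptyset=+\infty$. Define $\xi_n=\{x:o\to(n,x)\}$, $u_n=\sup\xi_n$ and $\ell_n=\inf\xi_n$. For $n\ge1$, let $$\overline{\xi}_n=\{x:\exists y\le0\text{ such that }(0,y)\to(n,x)\text{ or }(1,y)\to(n,x)\},$$ where only sites of $\mathcal{L}$ are considered, and let $\overline{u}_n=\sup\overline{\xi}_n$. *)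

From HB Require Import structures.
From mathcomp Require Import all_boot all_order all_algebra.
From mathcomp Require Import all_classical all_reals ereal.
From mathcomp Require Import Rstruct.

Set Implicit Arguments. Unset Strict Implicit. Unset Printing Implicit Defensive.
Import Order.TTheory GRing.Theory Num.Theory.
Local Open Scope ring_scope.
Local Open Scope classical_set_scope.

Definition site := (int * int)%type.

Definition in_L (z : site) : bool := (0 <= z.1) && ((z.1 + z.2) \in dvdz 2).

Definition is_step (z w : site) : bool :=
  [|| w == (z.1 + 1, z.2 + 1), w == (z.1 + 2, z.2) | w == (z.1 + 1, z.2 - 1)].

Inductive reach (open : site -> bool) : site -> site -> Prop :=
| reach0 z : in_L z -> reach open z z
| reachS z w z' : in_L z -> open z -> is_step z w -> reach open w z' ->
    reach open z z'.

Definition xi (open : site -> bool) (n : nat) : set int :=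
  [set x | reach open (0, 0) (n%:Z, x)].

Definition xibar (open : site -> bool) (n : nat) : set int :=
  [set x | exists y : int, y <= 0 /\
     (reach open (0, y) (n%:Z, x) \/ reach open (1, y) (n%:Z, x))].

Definition extZ (S : set int) : set (\bar Rdefinitions.R) := [set ((x%:~R : Rdefinitions.R)%:E) | x in S].

(* sup / inf in the extended reals: sup set0 = -oo, inf set0 = +oo *)
Definition u_ (open : site -> bool) (n : nat) : \bar Rdefinitions.R := ereal_sup (extZ (xi open n)).
Definition l_ (open : site -> bool) (n : nat) : \bar Rdefinitions.R := ereal_inf (extZ (xi open n)).
Definition ubar_ (open : site -> bool) (n : nat) : \bar Rdefinitions.R :=
  ereal_sup (extZ (xibar open n)).

From HB Require Import structures.
From mathcomp Require Import all_boot all_order all_algebra.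
From mathcomp Require Import all_classical all_reals ereal.
From mathcomp Require Import Rstruct.
From mathcomp Require Import zify.

(* A path from a site w to (n, x) and a path from a site g, itself reachable
   from a source o, to (n, l) with l <= x must meet when w starts in the cone
   below g: advancing whichever path is behind in time keeps w in the cone
   below g (parity of L rules out a jump past g at equal times), while at time
   n the end points satisfy x <= l.  At the meeting site the two paths can be
   glued, so (n, x) is reachable from o.  With o the origin, every starting
   point (0, y) or (1, y) with y <= 0 lies in the cone below o. *)

Set Implicit Arguments. Unset Strict Implicit.
Import Order.TTheory GRing.Theory Num.Theory.
Local Open Scope ring_scope.
Local Open Scope classical_set_scope.

Definition in_lower_cone (g w : site) : Prop := w.2 + `|g.1 - w.1| <= g.2.

Lemma is_step_cases z w : is_step z w ->
  [\/ w = (z.1 + 1, z.2 + 1), w = (z.1 + 2, z.2) | w = (z.1 + 1, z.2 - 1)].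
Proof. by case/or3P=> /eqP ->; [apply: Or31 | apply: Or32 | apply: Or33]. Qed.

Lemma is_step_time z w : is_step z w -> z.1 < w.1.
Proof. by case/is_step_cases=> ->; rewrite /=; lia. Qed.

Lemma in_L_same_time_gap z w : in_L z -> in_L w -> z.1 = w.1 -> z <> w ->
  w.2 <= z.2 -> w.2 <= z.2 - 2.
Proof.
case: z w => [t a] [t' b]; rewrite /in_L /=.
move=> /andP[_ /dvdzP[p even_z]] /andP[_ /dvdzP[q even_w]] tt' neq ba.
have nab : b <> a by move=> eab; apply: neq; rewrite tt' eab.
lia.
Qed.

Section Reach.
Variable open : site -> bool.

Lemma reach_in_L z z' : reach open z z' -> in_L z.
Proof. by case. Qed.

Lemma reach_in_L_end z z' : reach open z z' -> in_L z'.
Proof. by elim. Qed.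

Lemma reach_le_time z z' : reach open z z' -> z.1 <= z'.1.
Proof. by elim=> // z1 w z2 _ _ /is_step_time; lia. Qed.

Lemma reach_eq_time z z' : reach open z z' -> z'.1 <= z.1 -> z = z'.
Proof.
case=> // z1 w z2 _ _ /is_step_time zw /reach_le_time wz2; lia.
Qed.

Lemma reach_trans a b c : reach open a b -> reach open b c -> reach open a c.
Proof. by elim=> // z w z' Lz oz st _ IH /IH; apply: reachS. Qed.

Lemma reach_rstep a b c : reach open a b -> open b -> is_step b c -> in_L c ->
  reach open a c.
Proof.
move=> ab ob bc Lc; apply: (reach_trans ab).
exact: reachS (reach_in_L_end ab) ob bc (reach0 open Lc).
Qed.

Lemma in_lower_cone_step_lower g w w' : in_lower_cone g w -> is_step w w' ->
  w.1 < g.1 -> in_lower_cone g w'.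
Proof. by rewrite /in_lower_cone => + /is_step_cases[] ->; rewrite /=; lia. Qed.

Lemma in_lower_cone_step_upper g g' w : in_L g -> in_L w -> g <> w ->
  in_lower_cone g w -> is_step g g' -> g.1 <= w.1 -> in_lower_cone g' w.
Proof.
rewrite /in_lower_cone => Lg Lw gw cone /is_step_cases gg' gw1.
have [eq1|ne1] := eqVneq g.1 w.1.
  have := in_L_same_time_gap Lg Lw eq1 gw; case: gg' => ->; rewrite /=; lia.
by case: gg' => ->; rewrite /=; lia.
Qed.

Section Crossing.
Variables (o : site) (n l x : int).
Hypothesis le_lx : l <= x.

Let meets_below w := forall g, reach open o g -> reach open g (n, l) ->
  in_lower_cone g w -> reach open o (n, x).

Lemma meets_below_of_later w : reach open w (n, x) ->
  (forall g : site, w.1 < g.1 -> reach open o g -> reach open g (n, l) ->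
     in_lower_cone g w -> reach open o (n, x)) ->
  meets_below w.
Proof.
move=> wx later g og gl; move: gl og; move ez: (n, l) => z gl.
elim: gl ez => {g z}.
- move=> g Lg ez og cone; subst g.
  have [eq_gw|gw] := eqVneq (n, l) w; first by apply: reach_trans og _; rewrite eq_gw.
  have [lt_wg|le_gw] := ltP w.1 n; first exact: later (n, l) lt_wg og (reach0 open Lg) cone.
  move: gw cone; rewrite (reach_eq_time wx) //= => /eqP gw cone.
  by case: gw; congr pair; move: cone; rewrite /in_lower_cone /=; lia.
- move=> g g' z Lg og_open st g'z IH ez og cone; subst z.
  have [eq_gw|gw] := eqVneq g w; first by apply: reach_trans og _; rewrite eq_gw.
  have [lt_wg|le_gw] := ltP w.1 g.1.
    exact: later og (reachS Lg og_open st g'z) cone.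
  apply: IH => //; first exact: reach_rstep og og_open st (reach_in_L g'z).
  exact: in_lower_cone_step_upper Lg (reach_in_L wx) (elimN eqP gw) cone st le_gw.
Qed.

Lemma reach_cross w : reach open w (n, x) -> meets_below w.
Proof.
move ez: (n, x) => z wx; elim: wx ez => {w z} [w Lw ez|w w' z Lw ow st w'z IH ez].
  subst w; apply: meets_below_of_later; first exact: reach0.
  by move=> g /= lt_ng _ /reach_le_time /=; lia.
subst z; apply: meets_below_of_later; first exact: reachS w'z.
move=> g lt_wg og gl cone; apply: IH og gl _ => //.
exact: in_lower_cone_step_lower cone st lt_wg.
Qed.

End Crossing.
End Reach.

Lemma xi_sub_xibar open n : xi open n `<=` xibar open n.
Proof. by move=> x xi_x; exists 0; split => //; left. Qed.

Lemma l_le_xi open n x : xi open n x ->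
  (l_ open n <= (x%:~R : Rdefinitions.R)%:E)%E.
Proof. by move=> xi_x; apply: ereal_inf_lbound; exists x. Qed.

Lemma xi_le_of_l_le open n x : (l_ open n <= (x%:~R : Rdefinitions.R)%:E)%E ->
  exists2 z, xi open n z & z <= x.
Proof.
move=> lx; have : (l_ open n < ((x + 1)%:~R : Rdefinitions.R)%:E)%E.
  by apply: le_lt_trans lx _; rewrite lte_fin ltr_int ltrDl.
case/ereal_inf_lt=> _ [z xi_z <-]; rewrite lte_fin ltr_int => zx.
by exists z => //; lia.
Qed.

Lemma xi_of_xibar open n x : xibar open n x ->
  (l_ open n <= (x%:~R : Rdefinitions.R)%:E)%E -> xi open n x.
Proof.
move=> [y [y_le0 start]] /xi_le_of_l_le[z xi_z zx].
have cross s : reach open s (n%:Z, x) -> in_lower_cone (0, 0) s -> xi open n x.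
  by move=> sx cone; apply: (reach_cross zx sx (reach0 open _) xi_z cone).
case: start => [/cross|sx]; first by apply; rewrite /in_lower_cone /=; lia.
case/andP: (reach_in_L sx) => _ /dvdzP[p /= odd_y].
by apply: (cross _ sx); rewrite /in_lower_cone /=; lia.
Qed.

Theorem mainTheorem4 (open : site -> bool) (n : nat) :
  (1 <= n)%N ->
  xi open n = [set x | xibar open n x /\ (l_ open n <= ((x%:~R : Rdefinitions.R)%:E))%E] /\
  (xi open n !=set0 -> u_ open n = ubar_ open n).
Proof.
move=> _; split.
  apply/seteqP; split=> x; first by move=> xi_x; split; [apply: xi_sub_xibar | apply: l_le_xi].
  by case; apply: xi_of_xibar.
case=> a xi_a; apply/eqP; rewrite eq_le; apply/andP; split.
  by apply: le_ereal_sup => _ [z xi_z <-]; exists z => //; apply: xi_sub_xibar.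
apply: ge_ereal_sup => _ [z xibar_z <-].
have [lz|zl] := leP (l_ open n) (z%:~R : Rdefinitions.R)%:E.
  by apply: ereal_sup_ubound; exists z => //; apply: xi_of_xibar.
apply: le_trans (ltW zl) (le_trans (l_le_xi xi_a) _).
by apply: ereal_sup_ubound; exists a.
Qed.
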